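(* Let $\mathcal{J}$ be a Jordan subalgebra of $H(F_{2n},j)$ isomorphic to $F_n^{(+)}$. Then there is an automorphism $\varphi$ of $H(F_{2n},j)$ such that $$\varphi(\mathcal{J})=\left\{\begin{pmatrix} X & 0\\ 0 & X^t\end{pmatrix} : X\in F_n\right\}.$$
   Context: $F$ is an algebraically closed field of characteristic different from $2$. $F_k$ denotes the algebra of $k\times k$ matrices over $F$; $F_k^{(+)}$ is the Jordan algebra on $F_k$ with product $X\odot Y=\frac{XY+YX}{2}$; $H(F_{2n},j)$ is the Jordan subalgebra of $F_{2n}^{(+)}$ consisting of all matrices $\begin{pmatrix} A & B\\ C & A^t\end{pmatrix}$ with $A\in F_n$ arbitrary and $B,C\in F_n$ skew-symmetric. Automorphisms are Jordan algebra automorphisms. *)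

From mathcomp Require Import all_boot all_order all_algebra.
Set Implicit Arguments. Unset Strict Implicit. Unset Printing Implicit Defensive.
Import GRing.Theory.
Local Open Scope ring_scope.

Section Jordan.
Variable F : fieldType.

Definition jprod (m : nat) (X Y : 'M[F]_m) : 'M[F]_m :=
  (2%:R)^-1 *: (X *m Y + Y *m X).

Definition inHj (n : nat) (M : 'M[F]_(n + n)) : Prop :=
  exists (A B C : 'M[F]_n),
    B^T = - B /\ C^T = - C /\ M = block_mx A B C A^T.

Definition jordan_subalgebra_Hj (n : nat) (J : 'M[F]_(n + n) -> Prop) : Prop :=
  (forall M, J M -> inHj M) /\
  J 0 /\
  (forall (a : F) M N, J M -> J N -> J (a *: M + N)) /\
  (forall M N, J M -> J N -> J (jprod M N)).

Definition jiso_to_Fn_plus (n : nat) (J : 'M[F]_(n + n) -> Prop) : Prop :=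
  exists psi : 'M[F]_n -> 'M[F]_(n + n),
    (forall (a : F) X Y, psi (a *: X + Y) = a *: psi X + psi Y) /\
    injective psi /\
    (forall M, J M <-> exists X, psi X = M) /\
    (forall X Y, psi (jprod X Y) = jprod (psi X) (psi Y)).

Definition jautomorphism_Hj (n : nat) (phi : 'M[F]_(n + n) -> 'M[F]_(n + n)) : Prop :=
  (forall M, inHj M -> inHj (phi M)) /\
  (forall (a : F) M N, inHj M -> inHj N -> phi (a *: M + N) = a *: phi M + phi N) /\
  (forall M N, inHj M -> inHj N -> phi M = phi N -> M = N) /\
  (forall N, inHj N -> exists M, inHj M /\ phi M = N) /\
  (forall M N, inHj M -> inHj N -> phi (jprod M N) = jprod (phi M) (phi N)).

End Jordan.

From HB Require Import structures.
From mathcomp Require Import all_boot all_order all_algebra.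
Set Implicit Arguments. Unset Strict Implicit. Unset Printing Implicit Defensive.
Import GRing.Theory.
Local Open Scope ring_scope.

(* Put u_ij = psi(e_ij) for the given Jordan isomorphism psi from F_n^(+) onto J.
   These satisfy u_ij u_kl + u_kl u_ij = [j = k] u_il + [l = i] u_kj, and the
   goal is to conjugate them into the model u_ij = diag(e_ij, e_ji).  A vector v
   with u_oo v = v and u_ok v = 0 for k <> o (in the model, v = (e_o, 0); one is
   found in the image of the idempotent u_oo u_oi u_io u_oo, or of u_oo if n = 1)
   satisfies u_ij (u_ko v) = [j = k] u_io v, so the matrix L with columns u_jo v
   has psi(X) L = L X.  The transposed units u_ji give likewise L' with
   psi(X) L' = L' X^T.  Every u_ij is self-adjoint for the skew form S defining
   j, whence L^T S L = 0 = L'^T S L', and v, v' can be normalised so that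
   L^T S L' = 1.  Hence Q = [L L'] is symplectic, conjugation by Q^-1 is an
   automorphism of H(F_{2n}, j), and it sends psi(X) to diag(X, X^T). *)

Lemma mulmxMnl (R : pzSemiRingType) p q r (A : 'M[R]_(p, q)) (B : 'M_(q, r)) k :
  A *+ k *m B = (A *m B) *+ k.
Proof. exact: (raddfMn (mulmxr B)). Qed.

Lemma mulmxMnr (R : pzSemiRingType) p q r (A : 'M[R]_(p, q)) (B : 'M_(q, r)) k :
  A *m (B *+ k) = (A *m B) *+ k.
Proof. exact: raddfMn. Qed.

Lemma trmx11 (R : Type) (A : 'M[R]_1) : A^T = A.
Proof. by apply/matrixP => i j; rewrite mxE !ord1. Qed.

Lemma eq_col_mx (R : Type) m p (A B : 'M[R]_(m, p)) :
  (forall j, col j A = col j B) -> A = B.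
Proof.
by move=> AB; apply/matrixP => i j; have /matrixP/(_ i 0) := AB j; rewrite !mxE.
Qed.

Section JordanMatrixUnits.
Variables (F : fieldType) (N n : nat).
Hypothesis two_neq0 : (2%:R : F) != 0.

Lemma mx_mulr2n_eq0 p q (X : 'M[F]_(p, q)) : (X *+ 2 == 0) = (X == 0).
Proof. by rewrite -scaler_nat scaler_eq0 (negbTE two_neq0). Qed.

Lemma idem_anticomm_mul0 (e c : 'M[F]_N) :
  e *m e = e -> e *m c + c *m e = 0 -> e *m c = 0 /\ c *m e = 0.
Proof.
move=> ee ec0.
have ec_ece : e *m c + e *m c *m e = 0.
  by have := congr1 (mulmx e) ec0; rewrite mulmxDr !mulmxA ee mulmx0.
have ece_ce : e *m c *m e + c *m e = 0.
  by have := congr1 (mulmx^~ e) ec0; rewrite /= mulmxDl -[c *m e *m e]mulmxA ee mul0mx.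
have ec_ce : e *m c = c *m e.
  by apply: (@addIr _ (e *m c *m e)); rewrite ec_ece addrC ece_ce.
have /eqP : e *m c *+ 2 = 0 by rewrite mulr2n {2}ec_ce ec0.
by rewrite mx_mulr2n_eq0 => /eqP ec_0; rewrite -ec_ce ec_0.
Qed.

Definition jordan_units (u : 'I_n -> 'I_n -> 'M[F]_N) : Prop :=
  forall i j k l, u i j *m u k l + u k l *m u i j
                  = u i l *+ (j == k) + u k j *+ (l == i).

Lemma jordan_units_tr u : jordan_units u -> jordan_units (fun i j => u j i).
Proof. by move=> uJ i j k l; rewrite uJ addrC [k == j]eq_sym [i == l]eq_sym. Qed.

Section Units.
Variable u : 'I_n -> 'I_n -> 'M[F]_N.
Hypothesis uJ : jordan_units u.

Lemma unit_idem i : u i i *m u i i = u i i.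
Proof.
have := uJ i i i i; rewrite eqxx -mulr2n => /eqP.
by rewrite -subr_eq0 -mulrnBl mx_mulr2n_eq0 subr_eq0 => /eqP.
Qed.

Lemma unit_sq0 i j : i != j -> u i j *m u i j = 0.
Proof.
move=> ij; have := uJ i j i j; rewrite eq_sym (negbTE ij) addr0 -mulr2n.
by move/eqP; rewrite mx_mulr2n_eq0 => /eqP.
Qed.

Lemma unit_anticomm i j k l :
  j != k -> l != i -> u i j *m u k l + u k l *m u i j = 0.
Proof. by move=> /negbTE jk /negbTE li; rewrite uJ jk li addr0. Qed.

Lemma unit_diagr i l : i != l -> u i i *m u i l + u i l *m u i i = u i l.
Proof. by move=> /negbTE il; rewrite uJ eqxx eq_sym il addr0. Qed.

Lemma unit_diagc i l : i != l -> u i i *m u l i + u l i *m u i i = u l i.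
Proof. by move=> /negbTE il; rewrite uJ eqxx il add0r. Qed.

Lemma diag_unit_orth i k l :
  i != k -> i != l -> u i i *m u k l = 0 /\ u k l *m u i i = 0.
Proof.
move=> ik il; apply: idem_anticomm_mul0; first exact: unit_idem.
by apply: unit_anticomm; rewrite // eq_sym.
Qed.

(* Write [u i o = u i i u i o + u i o u i i] and use that [u i i] kills [u k o]. *)
Lemma unit_col_mul0 o i k : i != o -> k != o -> u i o *m u k o = 0.
Proof.
move=> io ko; have [<-|ik] := eqVneq i k; first exact: unit_sq0.
have [ii_ko _] := diag_unit_orth ik io.
have /eqP : u i o *m u k o + u k o *m u i o = 0.
  by apply: unit_anticomm; rewrite eq_sym.
rewrite addr_eq0 => /eqP io_ko.
rewrite -(unit_diagr io) mulmxDl -!mulmxA ii_ko mulmx0 addr0.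
by rewrite io_ko mulmxN mulmxA ii_ko mul0mx oppr0.
Qed.

End Units.

Lemma unit_row_mul0 u o i k :
  jordan_units u -> i != o -> k != o -> u o i *m u o k = 0.
Proof. by move/jordan_units_tr/unit_col_mul0; apply. Qed.


Section HighestVectors.
Variables (u : 'I_n -> 'I_n -> 'M[F]_N) (o : 'I_n).
Hypothesis uJ : jordan_units u.

Definition highest p (X : 'M[F]_(N, p)) : Prop :=
  u o o *m X = X /\ forall k, k != o -> u o k *m X = 0.

Lemma highest_mulmx p q (X : 'M_(N, p)) (Y : 'M_(p, q)) :
  highest X -> highest (X *m Y).
Proof. by case=> ooX oX; split=> [|k ko]; rewrite mulmxA ?ooX ?oX ?mul0mx. Qed.

Lemma highest_unit0 p (X : 'M_(N, p)) i j : highest X -> j != o -> u i j *m X = 0.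
Proof.
case=> ooX oX jo; have [->|io] := eqVneq i o; first exact: oX.
have [_ ij_oo] : u o o *m u i j = 0 /\ u i j *m u o o = 0.
  by apply: diag_unit_orth; rewrite // eq_sym.
by rewrite -ooX mulmxA ij_oo mul0mx.
Qed.

Lemma highest_units p (X : 'M_(N, p)) i j k :
  highest X -> u i j *m (u k o *m X) = (u i o *m X) *+ (j == k).
Proof.
move=> hX; have [ooX _] := hX; have [->|jo] := eqVneq j o; last first.
  have := congr1 (mulmx^~ X) (uJ i j k o).
  rewrite !mulmxDl !mulmxMnl -!mulmxA !(highest_unit0 _ hX jo).
  by rewrite mulmx0 mul0rn !addr0 => ->.
have [->|ko] := eqVneq k o; first by rewrite ooX mulr1n.
rewrite mulr0n; have [->|io] := eqVneq i o; last first.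
  by rewrite mulmxA unit_col_mul0 ?mul0mx.
have ok : o != k by rewrite eq_sym.
have := congr1 (mulmx^~ X) (unit_diagc uJ ok).
by rewrite mulmxDl -!mulmxA ooX => /(canRL (addrK _)); rewrite subrr.
Qed.

(* In the model, [corner i] is [diag(e_oo, 0)] while [u o o] is [diag(e_oo, e_oo)]. *)
Definition corner i := u o o *m u o i *m u i o *m u o o.

Lemma highest_corner i : i != o -> highest (corner i).
Proof.
move=> io; split=> [|k ko]; first by rewrite /corner !mulmxA (unit_idem uJ).
have ok : o != k by rewrite eq_sym.
have := unit_diagr uJ ok; rewrite addrC => /(canRL (addrK _)) ok_oo.
rewrite /corner !mulmxA ok_oo mulmxBl -[u o o *m _ *m _]mulmxA.
by rewrite !(unit_row_mul0 uJ ko io) mulmx0 subr0 !mul0mx.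
Qed.

Lemma corner_add_tr i : i != o ->
  corner i + u o o *m u i o *m u o i *m u o o = u o o.
Proof.
move=> io; have -> : corner i + u o o *m u i o *m u o i *m u o o
                     = u o o *m (u o i *m u i o + u i o *m u o i) *m u o o.
  by rewrite /corner mulmxDr mulmxDl !mulmxA.
have [ii_oo _] := diag_unit_orth uJ io io.
rewrite uJ !eqxx !mulr1n mulmxDr mulmxDl !(unit_idem uJ).
by rewrite -mulmxA ii_oo mulmx0 addr0.
Qed.

Lemma corner_idem i : i != o -> corner i *m corner i = corner i.
Proof.
move=> io; have oi : o != i by rewrite eq_sym.
have := unit_diagc uJ oi; rewrite addrC => /(canRL (addrK _)) io_oo.
have io_oo_io : u i o *m u o o *m u i o = 0.
  by rewrite io_oo mulmxBl -mulmxA (unit_sq0 uJ io) mulmx0 subr0.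
have corner_cross : corner i *m (u o o *m u i o *m u o i *m u o o) = 0.
  have -> : corner i *m (u o o *m u i o *m u o i *m u o o)
            = u o o *m u o i *m (u i o *m u o o *m u i o) *m u o i *m u o o.
    by rewrite /corner !mulmxA -(mulmxA _ (u o o) (u o o)) (unit_idem uJ).
  by rewrite io_oo_io mulmx0 !mul0mx.
have corner_oo : corner i *m u o o = corner i.
  by rewrite /corner -mulmxA (unit_idem uJ).
by rewrite -[RHS]corner_oo -(corner_add_tr io) mulmxDr corner_cross addr0.
Qed.

End HighestVectors.

Definition frame (u : 'I_n -> 'I_n -> 'M[F]_N) (o : 'I_n) (v : 'cV[F]_N) :
  'M[F]_(N, n) := \matrix_(r, j) (u j o *m v) r 0.

Lemma col_frame u o v j : col j (frame u o v) = u j o *m v.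
Proof. by apply/matrixP => r k; rewrite !mxE [k]ord1. Qed.

Section BilinearForm.
Variable S : 'M[F]_N.
Hypothesis S_unit : S \in unitmx.
Hypothesis S_skew : S^T = - S.

Definition selfadj (M : 'M[F]_N) : Prop := M^T *m S = S *m M.

Lemma trmx_mul_adj (A A' B B' : 'M[F]_N) :
  A^T *m S = S *m A' -> B^T *m S = S *m B' -> (A *m B)^T *m S = S *m (B' *m A').
Proof. by move=> hA hB; rewrite trmx_mul -mulmxA hA mulmxA hB mulmxA. Qed.

Lemma form_selfadj M p q (x : 'M_(N, p)) (y : 'M_(N, q)) :
  selfadj M -> (M *m x)^T *m S *m y = x^T *m S *m (M *m y).
Proof. by move=> hM; rewrite trmx_mul -[x^T *m M^T *m S]mulmxA hM !mulmxA. Qed.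

Lemma tr_form p q (x : 'M_(N, p)) (y : 'M_(N, q)) :
  (x^T *m S *m y)^T = - (y^T *m S *m x).
Proof. by rewrite !trmx_mul trmxK S_skew mulNmx mulmxN mulmxA. Qed.

Lemma form_selfadj0 M (x : 'cV_N) : selfadj M -> x^T *m S *m (M *m x) = 0.
Proof.
move=> hM; have := tr_form (M *m x) x; rewrite trmx11 form_selfadj // => /eqP.
by rewrite -addr_eq0 -mulr2n mx_mulr2n_eq0 => /eqP.
Qed.

Lemma form_entry p (x y : 'M_(N, p)) i j :
  (x^T *m S *m y) i j = ((col i x)^T *m S *m col j y) 0 0.
Proof. by rewrite tr_col -row_mul colE mulmxA -row_mul -colE !mxE. Qed.

Definition symplectic (Q : 'M[F]_N) : Prop := Q^T *m S *m Q = S.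

Lemma symplectic_unit Q : symplectic Q -> Q \in unitmx.
Proof.
move=> hQ; have : invmx S *m (Q^T *m S *m Q) = 1%:M by rewrite hQ mulVmx.
by rewrite !mulmxA => /mulmx1_unit [].
Qed.

Lemma symplectic_trmx Q : symplectic Q -> Q^T *m S = S *m invmx Q.
Proof.
by move=> hQ; rewrite -{2}hQ -mulmxA mulmxV ?mulmx1 ?symplectic_unit.
Qed.

Lemma symplectic_trmxV Q : symplectic Q -> (invmx Q)^T *m S = S *m Q.
Proof.
move=> hQ; rewrite -{1}hQ !mulmxA -trmx_mul mulmxV ?trmx1 ?mul1mx //.
exact: symplectic_unit.
Qed.

Lemma symplecticV Q : symplectic Q -> symplectic (invmx Q).
Proof.
by move=> hQ; rewrite /symplectic symplectic_trmxV // mulmxK ?symplectic_unit.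
Qed.

Lemma selfadj_conjmx Q M : symplectic Q -> selfadj M -> selfadj (conjmx Q M).
Proof.
move=> hQ hM; rewrite /selfadj conjumx ?symplectic_unit //.
have hQM := trmx_mul_adj (symplectic_trmx hQ) hM.
by rewrite (trmx_mul_adj hQM (symplectic_trmxV hQ)) !mulmxA.
Qed.

Section Frames.
Variables (u : 'I_n -> 'I_n -> 'M[F]_N) (o : 'I_n).
Hypothesis uJ : jordan_units u.
Hypothesis u_selfadj : forall i j, selfadj (u i j).

Lemma highest_pair_of_idem (T T' : 'M[F]_N) :
  T != 0 -> T *m T = T -> S *m T' = T^T *m S ->
  highest u o T -> highest (fun i j => u j i) o T' ->
  exists v v' : 'cV[F]_N, [/\ highest u o v, highest (fun i j => u j i) o v'
                                & v^T *m S *m v' = 1%:M].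
Proof.
move=> T0 TT ST hT hT'.
have [s Ts0] : exists s, col s T != 0.
  apply/existsP; apply: contraR T0 => /existsPn Tcol0.
  by apply/eqP/eq_col_mx => s; rewrite col0; apply/eqP/negPn/Tcol0.
have Tv : T *m col s T = col s T by rewrite !colE mulmxA TT.
have vS_free : row_free ((col s T)^T *m S).
  by rewrite /row_free mxrankMfree ?row_free_unit // rank_rV trmx_eq0 Ts0.
exists (col s T), (T' *m pinvmx ((col s T)^T *m S)); split.
- by rewrite colE; apply: highest_mulmx.
- exact: highest_mulmx.
rewrite mulmxA -(mulmxA _ S T') ST mulmxA -trmx_mul Tv.
exact: mulmxVp.
Qed.

Lemma exists_highest_pair : u o o != 0 ->
  exists v v' : 'cV[F]_N, [/\ highest u o v, highest (fun i j => u j i) o v'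
                                & v^T *m S *m v' = 1%:M].
Proof.
move=> oo0; have uJt := jordan_units_tr uJ.
have [i io|o_only] := pickP (fun i => i != o); last first.
  apply: (highest_pair_of_idem oo0 (unit_idem uJ o) (esym (u_selfadj o o)));
    by split=> [|k]; rewrite ?(unit_idem uJ) ?o_only.
have ST : S *m (u o o *m u i o *m u o i *m u o o) = (corner u o i)^T *m S.
  have h := trmx_mul_adj (u_selfadj o o) (u_selfadj o i).
  have {}h := trmx_mul_adj (trmx_mul_adj h (u_selfadj i o)) (u_selfadj o o).
  by rewrite /corner h !mulmxA.
apply: (highest_pair_of_idem _ (corner_idem uJ io) ST
         (highest_corner uJ io) (highest_corner uJt io)).
apply: contraNneq oo0 => c0.
have ct0 : u o o *m u i o *m u o i *m u o o = 0.
  by rewrite -(mulKmx S_unit (_ *m u o o)) ST c0 trmx0 mul0mx mulmx0.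
by rewrite -(corner_add_tr uJ io) c0 ct0 addr0.
Qed.

Lemma frame_intertwine v a b :
  highest u o v -> u a b *m frame u o v = frame u o v *m delta_mx a b.
Proof.
move=> hv; apply: eq_col_mx => j.
rewrite !colE -!mulmxA mul_delta_mx_cond mulmxMnr -!colE !col_frame.
exact: highest_units.
Qed.

Lemma form_frame0 v : highest u o v -> (frame u o v)^T *m S *m frame u o v = 0.
Proof.
move=> hv; apply/matrixP => i j.
rewrite form_entry !col_frame form_selfadj // highest_units // mulmxMnr.
by rewrite form_selfadj0 // mul0rn !mxE.
Qed.

Lemma form_frame1 v v' :
  highest u o v -> highest (fun i j => u j i) o v' -> v^T *m S *m v' = 1%:M ->
  (frame u o v)^T *m S *m frame (fun i j => u j i) o v' = 1%:M.
Proof.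
move=> hv hv' vSv'; have [oov' _] := hv'; apply/matrixP => i j.
rewrite form_entry !col_frame form_selfadj //.
rewrite (highest_units (jordan_units_tr uJ) o i j hv') /= oov' mulmxMnr vSv'.
by rewrite mulmxnE !mxE.
Qed.

End Frames.
End BilinearForm.
End JordanMatrixUnits.

Section SymplecticConjugation.
Context {F : fieldType} {n : nat}.

Definition jmx : 'M[F]_(n + n) := block_mx 0 1%:M (- 1%:M) 0.

Lemma jmx_skew : jmx^T = - jmx.
Proof.
by rewrite /jmx tr_block_mx opp_block_mx !trmx0 trmx1 raddfN /= trmx1 opprK oppr0.
Qed.

Lemma jmx_unit : jmx \in unitmx.
Proof.
have : jmx *m (- jmx) = 1%:M.
  rewrite mulmxN /jmx mulmx_block !mulmx0 !mul0mx !mulmx1 !mul1mx !add0r !addr0.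
  by rewrite (scalar_mx_block n n) opp_block_mx oppr0 opprK.
by case/mulmx1_unit.
Qed.

(* [H(F_{2n}, j)] is the fixed set of the involution [j(M) = jmx^-1 M^T jmx]. *)
Lemma inHj_selfadj (M : 'M[F]_(n + n)) : inHj M <-> selfadj jmx M.
Proof.
rewrite /selfadj /jmx; split.
  move=> [A [B [C [skB [skC ->]]]]]; rewrite tr_block_mx trmxK !mulmx_block.
  rewrite !mulmx0 !mul0mx !mulmx1 !mul1mx !mulmxN !mulNmx !mulmx1 !add0r !addr0.
  by rewrite !mul1mx skB skC opprK.
rewrite -[M]submxK tr_block_mx !mulmx_block !mulmx0 !mul0mx !mulmx1 !mul1mx.
rewrite !mulmxN !mulNmx !mul1mx !mulmx1 !add0r !addr0.
case/eq_block_mx => skC D_trA _ skB.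
exists (ulsubmx M), (ursubmx M), (dlsubmx M).
by split; last split; rewrite ?D_trA // -{2}skC opprK.
Qed.

Lemma conjmx_jautomorphism P : symplectic jmx P -> jautomorphism_Hj (conjmx P).
Proof.
move=> hP; have Pu := symplectic_unit jmx_unit hP.
have conjmx_inHj Q M : symplectic jmx Q -> inHj M -> inHj (conjmx Q M).
  by move=> hQ /inHj_selfadj hM; apply/inHj_selfadj/(selfadj_conjmx jmx_unit hQ hM).
split; first by move=> M; apply: conjmx_inHj.
split; first by move=> a M N _ _; rewrite /conjmx mulmxDr mulmxDl -scalemxAr -scalemxAl.
split; first by move=> M N _ _; apply: (can_inj (fun f => conjmxK f Pu)).
split.
  move=> M hM; exists (conjmx (invmx P) M); split; last exact: conjmxVK.
  exact: (conjmx_inHj _ _ (symplecticV jmx_unit hP) hM).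
move=> M N _ _; rewrite /jprod -!conjmxM ?inE ?stablemx_unit //.
by rewrite /conjmx -scalemxAr -scalemxAl mulmxDr mulmxDl.
Qed.

End SymplecticConjugation.

Section JordanEmbedding.
Variables (F : fieldType) (n : nat) (psi : 'M[F]_n -> 'M[F]_(n + n)).
Hypothesis two_neq0 : (2%:R : F) != 0.
Hypothesis psi_linear : linear psi.
Hypothesis psi_inj : injective psi.
Hypothesis psi_Hj : forall X, inHj (psi X).
Hypothesis psi_jprod : forall X Y, psi (jprod X Y) = jprod (psi X) (psi Y).

HB.instance Definition _ :=
  GRing.isLinear.Build F 'M[F]_n 'M[F]_(n + n) *:%R psi psi_linear.

Lemma jordan_units_delta : jordan_units (fun i j => psi (delta_mx i j)).
Proof.
move=> i j k l; apply: (scalerI (invr_neq0 two_neq0)).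
have := psi_jprod (delta_mx i j) (delta_mx k l).
by rewrite /jprod !mul_delta_mx_cond linearZ linearD !raddfMn => ->.
Qed.

Lemma delta_intertwine (L : 'M[F]_(n + n, n)) (tau : {linear 'M[F]_n -> 'M[F]_n}) :
  (forall i j, psi (delta_mx i j) *m L = L *m tau (delta_mx i j)) ->
  forall X, psi X *m L = L *m tau X.
Proof.
move=> h X; rewrite (matrix_sum_delta X) [psi _]linear_sum [tau _]linear_sum.
rewrite mulmx_suml mulmx_sumr; apply: eq_bigr => i _ /=.
rewrite [psi _]linear_sum [tau _]linear_sum mulmx_suml mulmx_sumr.
apply: eq_bigr => j _ /=.
by rewrite [psi _]linearZ [tau _]linearZ -scalemxAl h -scalemxAr.
Qed.

Lemma exists_symplectic_intertwiner :
  exists Q : 'M[F]_(n + n),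
    symplectic jmx Q /\ forall X, psi X *m Q = Q *m block_mx X 0 0 X^T.
Proof.
have [n0|n_gt0] := posnP n.
  have mx_eq (A B : 'M[F]_(n + n)) : A = B.
    by move: A B; rewrite n0 => A B; rewrite [A]flatmx0 [B]flatmx0.
  by exists 1%:M; split=> [|X]; apply: mx_eq.
pose o := Ordinal n_gt0; pose u i j := psi (delta_mx i j).
have uJ : jordan_units u := jordan_units_delta.
have u_selfadj i j : selfadj jmx (u i j) by apply/inHj_selfadj; apply: psi_Hj.
have oo0 : u o o != 0.
  rewrite -(linear0 psi) (inj_eq psi_inj); apply/eqP => /matrixP/(_ o o)/eqP.
  by rewrite !mxE !eqxx oner_eq0.
have [v [v' [hv hv' vSv']]] := exists_highest_pair two_neq0 jmx_unit uJ u_selfadj oo0.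
pose L := frame u o v; pose L' := frame (fun i j => u j i) o v'.
have LSL' : L^T *m jmx *m L' = 1%:M := form_frame1 two_neq0 uJ u_selfadj hv hv' vSv'.
exists (row_mx L L'); split.
  rewrite /symplectic tr_row_mx mul_col_mx !mul_col_row LSL'.
  rewrite (form_frame0 two_neq0 jmx_skew uJ u_selfadj hv).
  have uJt := jordan_units_tr uJ.
  rewrite (form_frame0 two_neq0 jmx_skew uJt (fun i j => u_selfadj j i) hv').
  by rewrite -[L'^T *m _ *m _]opprK -tr_form ?jmx_skew // LSL' trmx1.
move=> X; rewrite mul_mx_row mul_row_block !mulmx0 addr0 add0r.
rewrite (delta_intertwine (tau := idfun)) => [|i j]; last exact: frame_intertwine.
rewrite (delta_intertwine (tau := trmx)) // => i j /=.
by rewrite trmx_delta; apply: (frame_intertwine two_neq0 (jordan_units_tr uJ)).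
Qed.

End JordanEmbedding.

Theorem lemma2p4 (F : closedFieldType) (n : nat)
  (two_neq0 : (2%:R : F) != 0)
  (J : 'M[F]_(n + n) -> Prop)
  (hJ : jordan_subalgebra_Hj J)
  (hiso : jiso_to_Fn_plus J) :
  exists phi : 'M[F]_(n + n) -> 'M[F]_(n + n),
    jautomorphism_Hj phi /\
    (forall M, (exists N, J N /\ phi N = M) <->
               (exists X : 'M[F]_n, M = block_mx X 0 0 X^T)).
Proof.
have [J_Hj _] := hJ; have [psi [psi_lin [psi_inj [J_psi psi_jprod]]]] := hiso.
have psi_Hj X : inHj (psi X) by apply/J_Hj/J_psi; exists X.
have [Q [hQ psiQ]] :=
  exists_symplectic_intertwiner two_neq0 psi_lin psi_inj psi_Hj psi_jprod.
have conj_psi X : conjmx (invmx Q) (psi X) = block_mx X 0 0 X^T.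
  have Qu := symplectic_unit jmx_unit hQ.
  by rewrite conjVmx // -mulmxA psiQ mulmxA mulVmx ?mul1mx.
exists (conjmx (invmx Q)); split.
  exact: conjmx_jautomorphism (symplecticV jmx_unit hQ).
move=> M; split=> [[_ [/J_psi [X <-] <-]] | [X ->]]; first by exists X.
by exists (psi X); split; [apply/J_psi; exists X | exact: conj_psi].
Qed.
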